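(* Let $\delta,\varepsilon,\varepsilon'>0$ and $M\in\mathbb{N}$. Let $\mu$ be a distribution on $\{0,1\}^n\times\{0,1\}^n$ and $f\colon\{0,1\}^n\times\{0,1\}^n\to\{0,1\}$ such that $(f,\mu)$ has $(\varepsilon,\delta)$ relative-discrepancy. If $\Pi$ is a protocol with universal external information at most $M$, then for $(X,Y)\sim\mu$, \[ \mathrm{SD}\big(\Pi(X,Y)|_{f(X,Y)=0},\ \Pi(X,Y)|_{f(X,Y)=1}\big)\le 20\Big(\varepsilon+\varepsilon'+\frac{2^{4M}}{\varepsilon'^2}\delta\Big). \]
   Context: $\mathrm{SD}(P,Q)=\frac12\sum_u|P(u)-Q(u)|$ is statistical distance. $(f,\mu)$ has $(\varepsilon,\delta)$ relative-discrepancy if there is a distribution $\rho$ such that for every rectangle $R=A\times B$ with $\rho(R)\ge\delta$, $\mu(R\cap f^{-1}(0))\ge(\frac12-\varepsilon)\rho(R)$ and $\mu(R\cap f^{-1}(1))\ge(\frac12-\varepsilon)\rho(R)$. Protocols: Alice and Bob alternate, Alice sending $A_1,\dots,A_m$, Bob $B_1,\dots,B_m$, order $A_1,B_1,A_2,\dots$, each message depending on the sender's input, previous messages and the sender's randomness. For transcript $\pi=(a,b)$, $P^x_A(\pi)=\prod_j\Pr[A_j=a_j\mid A_{<j}=a_{<j},B_{<j}=b_{<j},X=x]$, $P^y_B(\pi)=\prod_j\Pr[B_j=b_j\mid A_{\le j}=a_{\le j},B_{<j}=b_{<j},Y=y]$. Universal external information at most $M$: there exist non-negative $\eta_A,\eta_B$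 on transcripts with $\eta_A\eta_B$ a probability distribution and, for all $x,y,\pi$, $2^{-M}\le P^x_A(\pi)/\eta_A(\pi)\le2^M$ and $2^{-M}\le P^y_B(\pi)/\eta_B(\pi)\le 2^M$. *)

From mathcomp Require Import all_boot all_order all_algebra.
Set Implicit Arguments. Unset Strict Implicit. Unset Printing Implicit Defensive.
Import Order.TTheory GRing.Theory Num.Theory.
Local Open Scope ring_scope.

Definition bits (n : nat) := {ffun 'I_n -> bool}.

Section Defs.
Variable R : realFieldType.

Definition is_distr (T : finType) (p : T -> R) : Prop :=
  (forall t, 0 <= p t) /\ \sum_(t : T) p t = 1.

Definition SD (T : finType) (P Q : T -> R) : R :=
  2^-1 * \sum_(u : T) `|P u - Q u|.

(* measure of a rectangle A x B, and of its intersection with f^{-1}(z)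
   (bits 0/1 are encoded as false/true) *)
Definition rect_mass (X Y : finType) (p : X * Y -> R) (A : {set X}) (B : {set Y}) : R :=
  \sum_(u : X * Y | (u.1 \in A) && (u.2 \in B)) p u.

Definition rect_mass_f (X Y : finType) (p : X * Y -> R) (f : X * Y -> bool) (z : bool)
  (A : {set X}) (B : {set Y}) : R :=
  \sum_(u : X * Y | [&& u.1 \in A, u.2 \in B & f u == z]) p u.

Definition rel_discrepancy (X Y : finType) (f : X * Y -> bool) (mu : X * Y -> R)
  (eps delta : R) : Prop :=
  exists rho : X * Y -> R, is_distr rho /\
    forall (A : {set X}) (B : {set Y}), rect_mass rho A B >= delta ->
      rect_mass_f mu f false A B >= (2^-1 - eps) * rect_mass rho A B /\
      rect_mass_f mu f true A B >= (2^-1 - eps) * rect_mass rho A B.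

(* A randomized protocol with m rounds, order A_1,B_1,...,A_m,B_m.  The protocol is given by
   the conditional distributions of each message given the sender's input
   and the previous messages (history = (Alice's previous messages,
   Bob's previous messages)); the round is the length of the history. *)
Record protocol (X Y : finType) (m : nat) (MA MB : finType) := Protocol {
  alice : X -> seq MA -> seq MB -> MA -> R;
  bob   : Y -> seq MA -> seq MB -> MB -> R }.

Definition valid_protocol (X Y : finType) m (MA MB : finType)
  (P : protocol X Y m MA MB) : Prop :=
  (forall x ha hb, is_distr (alice P x ha hb)) /\
  (forall y ha hb, is_distr (bob P y ha hb)).

Definition transcript m (MA MB : finType) := (m.-tuple MA * m.-tuple MB)%type.

Definition PA (X Y : finType) m (MA MB : finType) (P : protocol X Y m MA MB)
  (x : X) (pi : transcript m MA MB) : R :=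
  \prod_(j < m) alice P x (take j pi.1) (take j pi.2) (tnth pi.1 j).

(* P^y_B(pi) = prod_j Pr[B_j = b_j | A_<=j = a_<=j, B_<j = b_<j, Y = y] *)
Definition PB (X Y : finType) m (MA MB : finType) (P : protocol X Y m MA MB)
  (y : Y) (pi : transcript m MA MB) : R :=
  \prod_(j < m) bob P y (take j.+1 pi.1) (take j pi.2) (tnth pi.2 j).

Definition univ_ext_info_le (X Y : finType) m (MA MB : finType)
  (P : protocol X Y m MA MB) (M : nat) : Prop :=
  exists etaA etaB : transcript m MA MB -> R,
    (forall pi, 0 <= etaA pi) /\ (forall pi, 0 <= etaB pi) /\
    is_distr (fun pi => etaA pi * etaB pi) /\
    forall x y pi,
      2 ^- M <= PA P x pi / etaA pi <= 2 ^+ M /\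
      2 ^- M <= PB P y pi / etaB pi <= 2 ^+ M.

Definition transcript_cond (X Y : finType) m (MA MB : finType)
  (P : protocol X Y m MA MB) (mu : X * Y -> R) (f : X * Y -> bool) (z : bool)
  (pi : transcript m MA MB) : R :=
  (\sum_(u : X * Y | f u == z) mu u * PA P u.1 pi * PB P u.2 pi) /
  (\sum_(u : X * Y | f u == z) mu u).

End Defs.

From mathcomp Require Import all_boot all_order all_algebra.
From mathcomp Require Import ring lra.
Import Order.TTheory GRing.Theory Num.Theory.
Local Open Scope ring_scope.

Set Implicit Arguments. Unset Strict Implicit. Unset Printing Implicit Defensive.

(* Fix a transcript pi.  Dividing the transcript probabilities
   by the reference weights gives a(x) = P^x_A(pi)/eta_A(pi) and
   b(y) = P^y_B(pi)/eta_B(pi), both with values in [0, K], K = 2^M.  By the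
   layer-cake decomposition, a and b are nonnegative combinations of
   indicator functions of total weight <= K, so a(x) b(y) is a combination of
   rectangle indicators of total weight <= K^2.  Relative discrepancy, read as
   "(1/2 - eps)(rho(R) - delta) <= mu(R, f = z) for every rectangle R", thus
   transfers to the test function a(x) b(y): the probability of (f = z, pi)
   is at least (1/2 - eps)(rho-probability of pi - K^2 delta eta(pi)).  Since
   Pr[f = z] <= 1/2 + eps, both conditional transcript distributions dominate
   L(pi) = (1 - 4 eps)(rho-probability of pi - K^2 delta eta(pi)), whose total
   mass is (1 - 4 eps)(1 - K^2 delta), and SD <= 1 - sum L <= 4 eps + K^2 delta. *)

Lemma sum_tupleS (R : nmodType) (T : finType) (k : nat) (F : k.+1.-tuple T -> R) :
  \sum_(t : k.+1.-tuple T) F t = \sum_(x : T) \sum_(t : k.-tuple T) F [tuple of x :: t].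
Proof.
rewrite pair_big /= (reindex (fun p : T * k.-tuple T => [tuple of p.1 :: p.2])) /=.
  by apply: eq_bigr => -[x t].
exists (fun t : k.+1.-tuple T => (thead t, [tuple of behead t])).
  by move=> [x t] _; congr pair; apply: val_inj.
move=> t _; apply: val_inj => /=.
by case: t => -[|y s] //= _; rewrite /thead (tnth_nth y).
Qed.

Section Transcripts.
Variables (R : realFieldType) (X Y : finType) (m : nat) (MA MB : finType).
Variable P : protocol R X Y m MA MB.
Hypothesis P_valid : valid_protocol P.

Lemma continuation_mass1 (x : X) (y : Y) (k : nat) (ha : seq MA) (hb : seq MB) :
  \sum_(a : k.-tuple MA) \sum_(b : k.-tuple MB) \prod_(j < k)
    (alice P x (ha ++ take j a) (hb ++ take j b) (tnth a j) *
     bob P y (ha ++ take j.+1 a) (hb ++ take j b) (tnth b j)) = 1.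
Proof.
have [alice_distr bob_distr] := P_valid.
elim: k ha hb => [|k IH] ha hb.
  under eq_bigr do under eq_bigr do rewrite big_ord0.
  by rewrite !sumr_const !card_tuple.
rewrite sum_tupleS.
transitivity (\sum_(a0 : MA) alice P x ha hb a0 *
                \sum_(b0 : MB) bob P y (rcons ha a0) hb b0); last first.
  under eq_bigr => a0 _ do rewrite (proj2 (bob_distr _ _ _)) mulr1.
  exact: (proj2 (alice_distr _ _ _)).
apply: eq_bigr => a0 _.
rewrite exchange_big sum_tupleS mulr_sumr; apply: eq_bigr => b0 _.
rewrite -[RHS]mulr1 -[in RHS](IH (rcons ha a0) (rcons hb b0)).
rewrite exchange_big mulr_sumr; apply: eq_bigr => b _.
rewrite mulr_sumr; apply: eq_bigr => a _.
rewrite big_ord_recl /= !cats0; congr (_ * _ * _).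
  by rewrite take0 cats1 (tnth_nth b0).
apply: eq_bigr => j _.
by rewrite /bump /= !add0n !add1n /= !cat_rcons !(tnth_nth a0) !(tnth_nth b0).
Qed.

Lemma transcript_mass1 (x : X) (y : Y) :
  \sum_(pi : transcript m MA MB) PA P x pi * PB P y pi = 1.
Proof.
rewrite -(continuation_mass1 x y m [::] [::]) pair_big /=.
by apply: eq_bigr => -[a b] _; rewrite /PA /PB -big_split.
Qed.

Lemma PA_ge0 (x : X) (pi : transcript m MA MB) : 0 <= PA P x pi.
Proof. by apply: prodr_ge0 => j _; apply: (proj1 (proj1 P_valid _ _ _)). Qed.

Lemma PB_ge0 (y : Y) (pi : transcript m MA MB) : 0 <= PB P y pi.
Proof. by apply: prodr_ge0 => j _; apply: (proj1 (proj2 P_valid _ _ _)). Qed.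

Lemma transcript_marginal (w : X * Y -> R) (E : pred (X * Y)) :
  \sum_(pi : transcript m MA MB) \sum_(u | E u) w u * PA P u.1 pi * PB P u.2 pi
  = \sum_(u | E u) w u.
Proof.
rewrite exchange_big; apply: eq_bigr => u _.
under eq_bigr do rewrite -mulrA.
by rewrite -mulr_sumr transcript_mass1 mulr1.
Qed.

End Transcripts.

Section LayerCake.
Variables (R : realFieldType) (X : finType).

Definition support (a : X -> R) : {set X} := [set x | 0 < a x].

Lemma notin_support (a : X -> R) (x : X) : 0 <= a x -> x \notin support a -> a x = 0.
Proof. by move=> ax_ge0; rewrite inE -leNgt => ax_le0; apply/eqP; rewrite eq_le ax_le0. Qed.

Definition layer_decomposition (a : X -> R) (K : R) (c : {set X} -> R) : Prop :=
  [/\ forall S, 0 <= c S, \sum_S c S <= K & forall x, a x = \sum_S c S * (x \in S)%:R].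

Lemma peel_lowest_layer (a : X -> R) (K : R) (x0 : X) :
  (forall x, 0 <= a x <= K) -> x0 \in support a ->
  (forall x, x \in support a -> a x0 <= a x) ->
  let b x := a x - a x0 * (x \in support a)%:R in
  (forall x, 0 <= b x <= K - a x0) /\ support b \subset support a :\ x0.
Proof.
move=> a_bnd x0_supp x0_min b; split.
  move=> x; rewrite /b; case: (boolP (x \in support a)) => x_supp /=.
    by rewrite mulr1 subr_ge0 x0_min //= lerB //; case/andP: (a_bnd x).
  have ax0 : a x = 0 by apply: notin_support x_supp; case/andP: (a_bnd x).
  by rewrite mulr0 subr0 ax0 lexx subr_ge0 /=; case/andP: (a_bnd x0).
apply/subsetP => x; rewrite /b [in x \in support _]inE in_setD1 [in _ && _]inE.
case: (boolP (0 < a x)) => [ax_gt0 | ax_le0]; last first.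
  by rewrite inE (negbTE ax_le0) mulr0 subr0 => ax_gt0; rewrite ax_gt0 in ax_le0.
rewrite inE ax_gt0 mulr1 andbT subr_gt0; apply: contraTneq => ->; by rewrite ltxx.
Qed.

Lemma layer_cake (a : X -> R) (K : R) :
  0 <= K -> (forall x, 0 <= a x <= K) -> exists c, layer_decomposition a K c.
Proof.
move: {2}#|support a| (leqnn #|support a|) => k.
elim: k a K => [|k IH] a K supp_le K_ge0 a_bnd.
  exists (fun _ => 0); split=> // [|x]; first by rewrite big1.
  rewrite big1 => [|S _]; last by rewrite mul0r.
  apply: notin_support; first by case/andP: (a_bnd x).
  by move: supp_le; rewrite leqn0 cards_eq0 => /eqP ->; rewrite inE.
case: (set_0Vmem (support a)) => [supp0|[x1 x1_supp]].
  by apply: (IH a K) => //; rewrite supp0 cards0.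
have [x0 x0_supp x0_min] := @arg_minP _ R _ x1 (mem (support a)) a x1_supp.
have [b_bnd supp_b] := peel_lowest_layer a_bnd x0_supp x0_min.
set b := fun x => _ in b_bnd supp_b.
have a0K : a x0 <= K by case/andP: (a_bnd x0).
have supp_b_le : (#|support b| <= k)%N.
  apply: leq_trans (subset_leq_card supp_b) _.
  by move: supp_le; rewrite (cardsD1 x0 (support a)) [x0 \in _]x0_supp add1n ltnS.
have [c [c_ge0 c_sum c_def]] : exists c, layer_decomposition b (K - a x0) c.
  by apply: IH; rewrite ?subr_ge0.
exists (fun S => c S + (if S == support a then a x0 else 0)); split.
- move=> S; apply: addr_ge0 => //; case: ifP => // _.
  by apply: ltW; have : x0 \in support a := x0_supp; rewrite inE.
- rewrite big_split /= -big_mkcond /= big_pred1_eq.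
  by rewrite -(subrK (a x0) K) lerD2r.
- move=> x; under eq_bigr do rewrite mulrDl.
  rewrite big_split /= -c_def (bigD1 (support a)) //= eqxx big1 ?addr0.
    by rewrite /b subrK.
  by move=> S /negbTE ->; rewrite mul0r.
Qed.

End LayerCake.

Section ProductTests.
Variables (R : realFieldType) (X Y : finType).

Lemma rect_massE (w : X * Y -> R) (S : {set X}) (T : {set Y}) :
  rect_mass w S T = \sum_u w u * (u.1 \in S)%:R * (u.2 \in T)%:R.
Proof.
rewrite /rect_mass big_mkcond; apply: eq_bigr => u _.
by case: (u.1 \in S); case: (u.2 \in T); rewrite /= ?mulr1 ?mulr0.
Qed.

Lemma sum_product_layers (w : X * Y -> R) (a : X -> R) (b : Y -> R)
    (c : {set X} -> R) (e : {set Y} -> R) :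
  (forall x, a x = \sum_S c S * (x \in S)%:R) ->
  (forall y, b y = \sum_T e T * (y \in T)%:R) ->
  \sum_u w u * a u.1 * b u.2 = \sum_S \sum_T c S * e T * rect_mass w S T.
Proof.
move=> a_def b_def.
under eq_bigr => u _ do rewrite a_def b_def -mulrA big_distrlr mulr_sumr.
rewrite exchange_big; apply: eq_bigr => S _.
under eq_bigr => u _ do rewrite mulr_sumr.
rewrite exchange_big; apply: eq_bigr => T _.
by rewrite rect_massE mulr_sumr; apply: eq_bigr => u _; rewrite /=; ring.
Qed.

(* A lower bound  k (rho(S x T) - d) <= nu(S x T)  on all rectangles extends
   to product test functions a(x) b(y) with values in [0, K] and [0, L]:
   decompose a and b into layers and sum the rectangle bounds, the total
   layer weights being at most K and L. *)
Lemma product_test_lower_bound (nu rho : X * Y -> R) (a : X -> R) (b : Y -> R)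
    (K L k d : R) :
  0 <= K -> 0 <= L -> (forall x, 0 <= a x <= K) -> (forall y, 0 <= b y <= L) ->
  0 <= k -> 0 <= d ->
  (forall S T, k * (rect_mass rho S T - d) <= rect_mass nu S T) ->
  k * (\sum_u rho u * a u.1 * b u.2 - K * L * d) <= \sum_u nu u * a u.1 * b u.2.
Proof.
move=> K_ge0 L_ge0 a_bnd b_bnd k_ge0 d_ge0 rect_bnd.
have [c [c_ge0 c_sum a_def]] := layer_cake K_ge0 a_bnd.
have [e [e_ge0 e_sum b_def]] := layer_cake L_ge0 b_bnd.
rewrite !(sum_product_layers _ a_def b_def).
have weights : \sum_S \sum_T c S * e T = (\sum_S c S) * (\sum_T e T).
  by rewrite big_distrlr.
have lhsE : k * (\sum_S \sum_T c S * e T * rect_mass rho S T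
                  - d * ((\sum_S c S) * (\sum_T e T)))
    = \sum_S \sum_T c S * e T * (k * (rect_mass rho S T - d)).
  rewrite -weights [d * _]mulr_sumr -sumrB mulr_sumr; apply: eq_bigr => S _.
  rewrite [d * _]mulr_sumr -sumrB mulr_sumr; apply: eq_bigr => T _; ring.
apply: (@le_trans _ _ (\sum_S \sum_T c S * e T * (k * (rect_mass rho S T - d)))).
  rewrite -lhsE; apply: ler_wpM2l => //; apply: lerB => //.
  rewrite [K * L * d]mulrC; apply: ler_wpM2l => //.
  by apply: ler_pM => //; apply: sumr_ge0.
apply: ler_sum => S _; apply: ler_sum => T _.
by apply: ler_wpM2l => //; apply: mulr_ge0.
Qed.

End ProductTests.

Section TranscriptBound.
Variables (R : realFieldType) (X Y : finType) (m : nat) (MA MB : finType).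
Variable P : protocol R X Y m MA MB.

Definition restrict (mu : X * Y -> R) (f : X * Y -> bool) (z : bool) (u : X * Y) : R :=
  if f u == z then mu u else 0.

Lemma rect_mass_restrict (mu : X * Y -> R) (f : X * Y -> bool) (z : bool) S T :
  rect_mass (restrict mu f z) S T = rect_mass_f mu f z S T.
Proof.
rewrite /rect_mass /rect_mass_f big_mkcond [RHS]big_mkcond; apply: eq_bigr => u _.
by rewrite /restrict; case: (u.1 \in S); case: (u.2 \in T); case: (f u == z).
Qed.

Lemma transcript_weight_normalize (w : X * Y -> R) (etaA etaB : transcript m MA MB -> R) pi :
  etaA pi != 0 -> etaB pi != 0 ->
  \sum_u w u * PA P u.1 pi * PB P u.2 pi
  = (\sum_u w u * (PA P u.1 pi / etaA pi) * (PB P u.2 pi / etaB pi)) * (etaA pi * etaB pi).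
Proof.
move=> etaA_neq0 etaB_neq0; rewrite mulr_suml; apply: eq_bigr => u _.
by field; rewrite etaA_neq0 etaB_neq0.
Qed.

Lemma class_transcript_lower (mu rho : X * Y -> R) (f : X * Y -> bool) (z : bool)
    (etaA etaB : transcript m MA MB -> R) (K k d : R) (pi : transcript m MA MB) :
  0 <= K -> 0 <= k -> 0 <= d -> 0 < etaA pi -> 0 < etaB pi ->
  (forall x, 0 <= PA P x pi / etaA pi <= K) ->
  (forall y, 0 <= PB P y pi / etaB pi <= K) ->
  (forall S T, k * (rect_mass rho S T - d) <= rect_mass_f mu f z S T) ->
  k * (\sum_u rho u * PA P u.1 pi * PB P u.2 pi - K * K * d * (etaA pi * etaB pi))
  <= \sum_(u | f u == z) mu u * PA P u.1 pi * PB P u.2 pi.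
Proof.
move=> K_ge0 k_ge0 d_ge0 etaA_gt0 etaB_gt0 a_bnd b_bnd rect_bnd.
have class_sum : \sum_(u | f u == z) mu u * PA P u.1 pi * PB P u.2 pi
    = \sum_u restrict mu f z u * PA P u.1 pi * PB P u.2 pi.
  by rewrite big_mkcond; apply: eq_bigr => u _; rewrite /restrict; case: ifP; rewrite ?mul0r.
have restrict_bnd S T : k * (rect_mass rho S T - d) <= rect_mass (restrict mu f z) S T.
  by rewrite rect_mass_restrict.
have test_bnd := product_test_lower_bound K_ge0 K_ge0 a_bnd b_bnd k_ge0 d_ge0 restrict_bnd.
have eta_ge0 : 0 <= etaA pi * etaB pi by rewrite mulr_ge0 // ltW.
have [etaA_neq0 etaB_neq0] := (lt0r_neq0 etaA_gt0, lt0r_neq0 etaB_gt0).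
rewrite class_sum !(transcript_weight_normalize _ etaA_neq0 etaB_neq0).
set rho_test := \sum_u rho u * _ * _ in test_bnd *.
have -> : k * (rho_test * (etaA pi * etaB pi) - K * K * d * (etaA pi * etaB pi))
    = k * (rho_test - K * K * d) * (etaA pi * etaB pi) by ring.
exact: ler_wpM2r.
Qed.

End TranscriptBound.

(* Two functions that both dominate l are at statistical distance at most
   their average mass minus the mass of l, since |p - q| <= (p - l) + (q - l). *)
Lemma SD_le_common_lower (R : realFieldType) (T : finType) (p q l : T -> R) :
  (forall t, l t <= p t) -> (forall t, l t <= q t) ->
  SD p q <= 2^-1 * (\sum_t p t + \sum_t q t) - \sum_t l t.
Proof.
move=> lp lq; rewrite /SD.
have -> : 2^-1 * (\sum_t p t + \sum_t q t) - \sum_t l t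
    = 2^-1 * \sum_t ((p t - l t) + (q t - l t)).
  by rewrite big_split /= !sumrB; field.
apply: ler_wpM2l; first by rewrite invr_ge0 ler0n.
apply: ler_sum => t _; have := lp t; have := lq t.
by rewrite ler_norml => ? ?; apply/andP; split; lra.
Qed.

(* Conditioning: if a joint mass q is at least (1/2 - eps) B and the
   conditioning event has probability p <= 1/2 + eps, then q / p is at least
   (1 - 4 eps) B, because (1 - 4 eps)(1/2 + eps) <= 1/2 - eps. *)
Lemma conditional_lower (R : realFieldType) (eps p q B : R) :
  0 <= eps <= 4^-1 -> 0 < p <= 2^-1 + eps -> 0 <= q -> (2^-1 - eps) * B <= q ->
  (1 - 4 * eps) * B <= q / p.
Proof.
move=> /andP[eps_ge0 eps_le] /andP[p_gt0 p_le] q_ge0 qB.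
case: (leP B 0) => [B_le0 | B_gt0].
  apply: le_trans (divr_ge0 q_ge0 (ltW p_gt0)); apply: mulr_ge0_le0 => //; lra.
rewrite ler_pdivlMr //; apply: le_trans qB.
have mult : (1 - 4 * eps) * p <= 2^-1 - eps.
  apply: le_trans (_ : (1 - 4 * eps) * (2^-1 + eps) <= _); last by nra.
  apply: ler_wpM2l => //; lra.
by rewrite mulrAC ler_wpM2r // ltW.
Qed.

Lemma ratio_bound_pos (R : realFieldType) (M : nat) (p e : R) :
  0 <= e -> 2 ^- M <= p / e -> 0 < e.
Proof.
move=> e_ge0; rewrite lt_def e_ge0 andbT; apply: contraTneq => ->.
by rewrite invr0 mulr0 -ltNge invr_gt0 exprn_gt0.
Qed.

Lemma pow2_square_le (R : realFieldType) (M : nat) (e : R) :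
  0 < e <= 1 -> 2 ^+ M * 2 ^+ M <= 2 ^+ (4 * M) / e ^+ 2.
Proof.
move=> /andP[e_gt0 e_le1].
have K_ge1 : 1 <= (2 : R) ^+ M by rewrite exprn_ege1 // ler1n.
have -> : (2 : R) ^+ (4 * M) = (2 ^+ M * 2 ^+ M) * (2 ^+ M * 2 ^+ M).
  by rewrite mulnC exprM; ring.
have e2_le1 : e ^+ 2 <= 1 by rewrite expr_le1 // ltW.
have K2_ge1 : 1 <= (2 : R) ^+ M * 2 ^+ M by rewrite mulr_ege1.
rewrite ler_pdivlMr ?exprn_gt0 //.
by apply: ler_wpM2l; [rewrite mulr_ge0 ?exprn_ge0 | apply: le_trans e2_le1 K2_ge1].
Qed.

Definition class_mass (R : realFieldType) (X Y : finType) (mu : X * Y -> R)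
  (f : X * Y -> bool) (z : bool) : R := \sum_(u | f u == z) mu u.

Definition discrepancy_witness (R : realFieldType) (X Y : finType) (f : X * Y -> bool)
    (mu rho : X * Y -> R) (eps delta : R) : Prop :=
  forall (A : {set X}) (B : {set Y}), rect_mass rho A B >= delta ->
    rect_mass_f mu f false A B >= (2^-1 - eps) * rect_mass rho A B /\
    rect_mass_f mu f true A B >= (2^-1 - eps) * rect_mass rho A B.

Section Discrepancy.
Variables (R : realFieldType) (X Y : finType) (f : X * Y -> bool).
Variables (mu rho : X * Y -> R) (eps delta : R).
Hypothesis mu_distr : is_distr mu.
Hypothesis rho_distr : is_distr rho.
Hypothesis rho_disc : discrepancy_witness f mu rho eps delta.

(* Relative discrepancy applied to the full rectangle: both classes of f
   have mu-probability 1/2 +- eps. *)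
Lemma class_mass_bounds (z : bool) :
  delta <= 1 -> 2^-1 - eps <= class_mass mu f z <= 2^-1 + eps.
Proof.
move=> delta_le1.
have rho_full : rect_mass rho setT setT = 1.
  by rewrite -(proj2 rho_distr) /rect_mass; apply: eq_bigl => u; rewrite !in_setT.
have mu_full z' : rect_mass_f mu f z' setT setT = class_mass mu f z'.
  by rewrite /rect_mass_f /class_mass; apply: eq_bigl => u; rewrite !in_setT.
have full_large : delta <= rect_mass rho setT setT by rewrite rho_full.
have [lo_false lo_true] := rho_disc full_large.
rewrite !mu_full rho_full mulr1 in lo_false lo_true.
have classes : class_mass mu f false + class_mass mu f true = 1.
  rewrite -(proj2 mu_distr) (bigID f) addrC /class_mass.
  by congr (_ + _); apply: eq_bigl => u; case: (f u).
by case: z; apply/andP; split; lra.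
Qed.

(* Relative discrepancy as a lower bound valid on every rectangle, with an
   additive loss delta: small rectangles are covered by  rho(S x T) - delta <= 0. *)
Lemma rect_lower_bound (z : bool) (S : {set X}) (T : {set Y}) :
  0 <= delta -> eps <= 2^-1 ->
  (2^-1 - eps) * (rect_mass rho S T - delta) <= rect_mass_f mu f z S T.
Proof.
move=> delta_ge0 eps_le.
have k_ge0 : 0 <= 2^-1 - eps by rewrite subr_ge0.
have mass_ge0 : 0 <= rect_mass_f mu f z S T.
  by apply: sumr_ge0 => u _; apply: (proj1 mu_distr).
case: (leP delta (rect_mass rho S T)) => [large | small].
  have loss : 0 <= (2^-1 - eps) * delta by apply: mulr_ge0.
  by have [lo_false lo_true] := rho_disc large; rewrite mulrBr; case: z in mass_ge0 *; lra.
by apply: le_trans mass_ge0; apply: mulr_ge0_le0 => //; lra.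
Qed.

End Discrepancy.

Section Conditioning.
Variables (R : realFieldType) (X Y : finType) (m : nat) (MA MB : finType).
Variable P : protocol R X Y m MA MB.
Hypothesis P_valid : valid_protocol P.
Variables (mu : X * Y -> R) (f : X * Y -> bool).
Hypothesis mu_ge0 : forall u, 0 <= mu u.

Lemma sum_transcript_cond (z : bool) :
  \sum_pi transcript_cond P mu f z pi = class_mass mu f z / class_mass mu f z.
Proof. by rewrite /transcript_cond -mulr_suml transcript_marginal. Qed.

Lemma transcript_cond_ge0 (z : bool) (pi : transcript m MA MB) :
  0 <= transcript_cond P mu f z pi.
Proof.
apply: divr_ge0; apply: sumr_ge0 => u _ //.
by rewrite !mulr_ge0 ?PA_ge0 ?PB_ge0.
Qed.

Lemma transcript_cond_lower (rho : X * Y -> R) (etaA etaB : transcript m MA MB -> R)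
    (eps delta K : R) (z : bool) (pi : transcript m MA MB) :
  0 <= eps <= 4^-1 -> 0 <= delta -> 0 <= K -> 0 < etaA pi -> 0 < etaB pi ->
  (forall x, 0 <= PA P x pi / etaA pi <= K) ->
  (forall y, 0 <= PB P y pi / etaB pi <= K) ->
  2^-1 - eps <= class_mass mu f z <= 2^-1 + eps ->
  (forall S T, (2^-1 - eps) * (rect_mass rho S T - delta) <= rect_mass_f mu f z S T) ->
  (1 - 4 * eps) * (\sum_u rho u * PA P u.1 pi * PB P u.2 pi
                   - K * K * delta * (etaA pi * etaB pi))
  <= transcript_cond P mu f z pi.
Proof.
move=> eps_bnd delta_ge0 K_ge0 etaA_gt0 etaB_gt0 a_bnd b_bnd /andP[p_lo p_hi] rect_bnd.
have k_ge0 : 0 <= 2^-1 - eps by move: eps_bnd => /andP[? ?]; lra.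
apply: conditional_lower => //.
- by apply/andP; split => //; apply: lt_le_trans p_lo; move: eps_bnd => /andP[? ?]; lra.
- by apply: sumr_ge0 => u _; rewrite !mulr_ge0 ?PA_ge0 ?PB_ge0.
- exact: class_transcript_lower.
Qed.

Lemma SD_transcript_cond_le1 :
  SD (transcript_cond P mu f false) (transcript_cond P mu f true) <= 1.
Proof.
have sum_le1 z : \sum_pi transcript_cond P mu f z pi <= 1.
  rewrite sum_transcript_cond.
  by case: (eqVneq (class_mass mu f z) 0) => [->|nz]; rewrite ?mul0r ?divff.
apply: le_trans (SD_le_common_lower (l := fun=> 0) _ _) _;
  try by move=> pi; apply: transcript_cond_ge0.
by rewrite big1_eq subr0; have := sum_le1 false; have := sum_le1 true; lra.
Qed.

End Conditioning.

Section MainEstimate.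
Variables (R : realFieldType) (X Y : finType) (m : nat) (MA MB : finType).
Variable P : protocol R X Y m MA MB.
Hypothesis P_valid : valid_protocol P.
Variables (mu rho : X * Y -> R) (f : X * Y -> bool) (eps delta : R).
Hypothesis mu_distr : is_distr mu.
Hypothesis rho_distr : is_distr rho.
Hypothesis rho_disc : discrepancy_witness f mu rho eps delta.
Variables (M : nat) (etaA etaB : transcript m MA MB -> R).
Hypothesis etaA_ge0 : forall pi, 0 <= etaA pi.
Hypothesis etaB_ge0 : forall pi, 0 <= etaB pi.
Hypothesis eta_distr : is_distr (fun pi => etaA pi * etaB pi).
Hypothesis ratio_bnd : forall x y pi,
  2 ^- M <= PA P x pi / etaA pi <= 2 ^+ M /\ 2 ^- M <= PB P y pi / etaB pi <= 2 ^+ M.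
Variables (x0 : X) (y0 : Y).
Hypothesis eps_bnd : 0 <= eps <= 4^-1.
Hypothesis delta_bnd : 0 <= delta <= 1.

Lemma SD_transcript_cond_le :
  SD (transcript_cond P mu f false) (transcript_cond P mu f true)
  <= 1 - (1 - 4 * eps) * (1 - 2 ^+ M * 2 ^+ M * delta).
Proof.
have [delta_ge0 delta_le1] := andP delta_bnd.
have mu_ge0 := proj1 mu_distr.
have K_ge0 : (0 : R) <= 2 ^+ M by rewrite exprn_ge0.
have lower z pi : (1 - 4 * eps) * (\sum_u rho u * PA P u.1 pi * PB P u.2 pi
      - 2 ^+ M * 2 ^+ M * delta * (etaA pi * etaB pi)) <= transcript_cond P mu f z pi.
  have [/andP[loA _] /andP[loB _]] := ratio_bnd x0 y0 pi.
  have two_pow_ge0 : (0 : R) <= 2 ^- M by rewrite invr_ge0 exprn_ge0.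
  apply: transcript_cond_lower => //.
  - exact: ratio_bound_pos loA.
  - exact: ratio_bound_pos loB.
  - by move=> x; have [/andP[lo hi] _] := ratio_bnd x y0 pi; rewrite hi (le_trans _ lo).
  - by move=> y; have [_ /andP[lo hi]] := ratio_bnd x0 y pi; rewrite hi (le_trans _ lo).
  - exact: class_mass_bounds mu_distr rho_distr rho_disc z delta_le1.
  - by move=> S T; apply: rect_lower_bound => //; move: eps_bnd => /andP[? ?]; lra.
have rho_transcripts : \sum_pi \sum_u rho u * PA P u.1 pi * PB P u.2 pi = 1.
  by rewrite -(proj2 rho_distr); exact: (transcript_marginal P_valid rho xpredT).
have eta_sum : \sum_pi etaA pi * etaB pi = 1 := proj2 eta_distr.
have class_neq0 z : class_mass mu f z != 0.
  have /andP[lo _] := class_mass_bounds mu_distr rho_distr rho_disc z delta_le1.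
  by rewrite gt_eqF //; move: eps_bnd => /andP[? ?]; lra.
apply: le_trans (SD_le_common_lower (lower false) (lower true)) _.
rewrite !sum_transcript_cond // !divff // -mulr_sumr sumrB rho_transcripts -mulr_sumr eta_sum mulr1.
lra.
Qed.

End MainEstimate.

Theorem lemma3p8 (R : realFieldType) (delta eps eps' : R) (M n : nat)
  (mu : bits n * bits n -> R) (f : bits n * bits n -> bool)
  (m : nat) (MA MB : finType) (P : protocol R (bits n) (bits n) m MA MB) :
  0 < delta -> 0 < eps -> 0 < eps' ->
  is_distr mu ->
  rel_discrepancy f mu eps delta ->
  valid_protocol P ->
  univ_ext_info_le P M ->
  SD (transcript_cond P mu f false) (transcript_cond P mu f true)
    <= 20 * (eps + eps' + 2 ^+ (4 * M) / eps' ^+ 2 * delta).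
Proof.
move=> delta_gt0 eps_gt0 eps'_gt0 mu_distr [rho [rho_distr rho_disc]] P_valid
  [etaA [etaB [etaA_ge0 [etaB_ge0 [eta_distr ratio_bnd]]]]].
set W := 2 ^+ (4 * M) / eps' ^+ 2.
(* Outside the small-parameter regime the trivial bound SD <= 1 suffices. *)
case: (leP 1 (20 * (eps + eps' + W * delta))) => [large | small].
  by apply: le_trans large; apply: SD_transcript_cond_le1 => //; case: mu_distr.
have W_ge0 : 0 <= W by rewrite divr_ge0 ?exprn_ge0 // ltW.
have Wd_ge0 : 0 <= W * delta by rewrite mulr_ge0 // ltW.
have KK_le_W : 2 ^+ M * 2 ^+ M <= W by apply: pow2_square_le; apply/andP; split => //; lra.
have KK_ge1 : (1 : R) <= 2 ^+ M * 2 ^+ M by rewrite mulr_ege1 // exprn_ege1 // ler1n.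
have delta_le1 : delta <= 1.
  by have := ler_peMl (ltW delta_gt0) (le_trans KK_ge1 KK_le_W); lra.
have KKd_le : 2 ^+ M * 2 ^+ M * delta <= W * delta by apply: ler_wpM2r => //; apply: ltW.
have loss_ge0 : 0 <= eps * (2 ^+ M * 2 ^+ M * delta).
  by rewrite !mulr_ge0 ?exprn_ge0 // ltW.
apply: le_trans (SD_transcript_cond_le P_valid mu_distr rho_distr rho_disc
  etaA_ge0 etaB_ge0 eta_distr ratio_bnd [ffun=> false] [ffun=> false] _ _) _.
- by apply/andP; split; lra.
- by apply/andP; split => //; apply: ltW.
- lra.
Qed.
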